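(* Let $G\subset\mathrm{Diff}^1_+([0,1])$ be a group and let $\mathcal H=(h_n)_{n\in\mathbb N}$ be a sequence in $\mathrm{Diff}^1_+([0,1])$ such that $h_n g h_n^{-1}\to\mathrm{id}$ in the $C^1$-topology for every $g\in G$. Let $G_{\mathcal H}$ be the set of all $g\in\mathrm{Diff}^1_+([0,1])$ such that $h_n g h_n^{-1}\to\mathrm{id}$ in the $C^1$-topology. Then the completion $I^\infty(G)$ of $G$ is contained in $G_{\mathcal H}$; in particular $I^\infty(G)$ is a group of $C^1$-diffeomorphisms which is $C^1$-close to the identity.
   Context: (Such a $G$ is without linked fixed points.) A homeomorphism $h\in\mathrm{Homeo}_+([0,1])$ is induced by $g$ if $h(x)\in\{x,g(x)\}$ for every $x\in[0,1]$. For a group $G$, $I(G)$ is the group generated by all homeomorphisms induced by elements of $G$; $I^0(G)=G$, $I^{n+1}(G)=I(I^n(G))$, and the completion is $I^\infty(G)=\bigcup_n I^n(G)$. A group $G\subset \mathrm{Diff}^1_+([0,1])$ is $C^1$-close to the identity if there is a sequence $h_n\in \mathrm{Diff}^1_+([0,1])$ such that $h_n g h_n^{-1}\to \mathrm{id}$ in the $C^1$-topology for every $g\in G$. *)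

From Stdlib Require Import Reals.
Open Scope R_scope.

(* Maps of [0,1] are represented as functions R -> R that are the identity
   outside [0,1] (so composition and inversion are global operations). *)
Definition I01 (x : R) : Prop := 0 <= x <= 1.

Definition cont_on01 (f : R -> R) : Prop :=
  forall x, I01 x -> forall eps, 0 < eps -> exists delta, 0 < delta /\
    forall y, I01 y -> Rabs (y - x) < delta -> Rabs (f y - f x) < eps.

Definition has_deriv_on01 (f f' : R -> R) : Prop :=
  forall x, I01 x -> forall eps, 0 < eps -> exists delta, 0 < delta /\
    forall y, I01 y -> y <> x -> Rabs (y - x) < delta ->
      Rabs ((f y - f x) / (y - x) - f' x) < eps.

Definition C1_on01 (f : R -> R) : Prop :=
  exists f', has_deriv_on01 f f' /\ cont_on01 f'.

Definition inverse_pair (f g : R -> R) : Prop :=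
  forall x, f (g x) = x /\ g (f x) = x.

Definition homeo_plus (f : R -> R) : Prop :=
  (forall x, ~ I01 x -> f x = x) /\
  f 0 = 0 /\ f 1 = 1 /\
  (forall x y, I01 x -> I01 y -> x < y -> f x < f y) /\
  cont_on01 f /\
  (forall y, I01 y -> exists x, I01 x /\ f x = y).

Definition diff1_plus (f : R -> R) : Prop :=
  homeo_plus f /\ C1_on01 f /\ exists g, inverse_pair f g /\ C1_on01 g.

Definition conv_C1_id (u : nat -> R -> R) : Prop :=
  exists u' : nat -> R -> R, (forall n, has_deriv_on01 (u n) (u' n)) /\
    forall eps, 0 < eps -> exists N, forall n, (N <= n)%nat ->
      forall x, I01 x -> Rabs (u n x - x) < eps /\ Rabs (u' n x - 1) < eps.

Definition is_group (G : (R -> R) -> Prop) : Prop :=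
  G (fun x => x) /\
  (forall f g, G f -> G g -> G (fun x => f (g x))) /\
  (forall f, G f -> exists g, G g /\ inverse_pair f g).

Definition induced (h g : R -> R) : Prop :=
  homeo_plus h /\ forall x, I01 x -> h x = x \/ h x = g x.

Inductive gen_group (S : (R -> R) -> Prop) : (R -> R) -> Prop :=
| gen_base f : S f -> gen_group S f
| gen_id : gen_group S (fun x => x)
| gen_comp f g : gen_group S f -> gen_group S g -> gen_group S (fun x => f (g x))
| gen_inv f g : gen_group S f -> inverse_pair f g -> gen_group S g
| gen_ext f g : gen_group S f -> (forall x, f x = g x) -> gen_group S g.

Definition I_op (G : (R -> R) -> Prop) : (R -> R) -> Prop :=
  gen_group (fun h => exists g, G g /\ induced h g).

Fixpoint I_iter (n : nat) (G : (R -> R) -> Prop) : (R -> R) -> Prop :=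
  match n with
  | O => G
  | S m => I_op (I_iter m G)
  end.

Definition I_inf (G : (R -> R) -> Prop) : (R -> R) -> Prop :=
  fun f => exists n, I_iter n G f.

(* G_H, where hinv n is the inverse of h n *)
Definition G_H (h hinv : nat -> R -> R) (g : R -> R) : Prop :=
  diff1_plus g /\ conv_C1_id (fun n x => h n (g (hinv n x))).

Definition C1_close_to_id (G : (R -> R) -> Prop) : Prop :=
  exists h : nat -> R -> R, exists hinv : nat -> R -> R,
    (forall n, diff1_plus (h n)) /\ (forall n, inverse_pair (h n) (hinv n)) /\
    forall g, G g -> conv_C1_id (fun n x => h n (g (hinv n x))).

From Stdlib Require Import Reals Lra Psatz FunctionalExtensionality ClassicalEpsilon Classical.
Open Scope R_scope.

(* The key observation: if g is in G_H and g p = p, then g'(p) = 1, because the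
   conjugate h_n g h_n^-1 fixes h_n p and has derivative g'(p) there, for every n.
   Hence a homeomorphism v induced by such a g is C^1, with derivative 1 where
   v is the identity and g' elsewhere: near a point moved by g, v coincides
   either with the identity or with g; near a point fixed by g, both candidate
   derivatives are close to 1.  The same argument applied to the conjugates
   shows h_n v h_n^-1 -> id in C^1, so G_H is closed under induced maps. *)

Lemma Rabs_lt_iff a e : Rabs a < e <-> - e < a < e.
Proof.
  split.
  - intro H; destruct (Rabs_def2 _ _ H); lra.
  - intros [H1 H2]; apply Rabs_def1; lra.
Qed.

(* Our epsilon-delta limits coincide with Stdlib's [limit1_in], whose
   calculus (composition, products, uniqueness) we reuse. *)
Lemma limit1_in_iff F D l x : limit1_in F D l x <->
  forall eps, 0 < eps -> exists delta, 0 < delta /\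
    forall y, D y -> Rabs (y - x) < delta -> Rabs (F y - l) < eps.
Proof.
  unfold limit1_in, limit_in; simpl; unfold Rdist; split; intros H eps He.
  - destruct (H eps He) as [d [Hd H']]. exists d; split; [lra|].
    intros y Dy Hy. apply H'; tauto.
  - destruct (H eps He) as [d [Hd H']]. exists d; split; [lra|].
    intros y [Dy Hy]. apply H'; tauto.
Qed.

Lemma lim_restrict F D D' l x : (forall y, D' y -> D y) ->
  limit1_in F D l x -> limit1_in F D' l x.
Proof.
  intros HD H; apply limit1_in_iff; intros eps He.
  destruct (proj1 (limit1_in_iff _ _ _ _) H eps He) as [d [Hd H']].
  exists d; split; auto.
Qed.

Lemma lim_ext F G D l x : (forall y, D y -> F y = G y) ->
  limit1_in F D l x -> limit1_in G D l x.
Proof.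
  intros HD H; apply limit1_in_iff; intros eps He.
  destruct (proj1 (limit1_in_iff _ _ _ _) H eps He) as [d [Hd H']].
  exists d; split; auto. intros y Dy Hy; rewrite <- HD; auto.
Qed.

Definition punctured01 (x : R) : R -> Prop := fun y => I01 y /\ y <> x.

Lemma has_deriv_limit f f' : has_deriv_on01 f f' <-> forall x, I01 x ->
  limit1_in (fun y => (f y - f x) / (y - x)) (punctured01 x) (f' x) x.
Proof.
  split; intros H x Hx.
  - apply limit1_in_iff; intros eps He.
    destruct (H x Hx eps He) as [d [Hd Hq]].
    exists d; split; [exact Hd|]. intros y [Iy Ny]; auto.
  - intros eps He.
    destruct (proj1 (limit1_in_iff _ _ _ _) (H x Hx) eps He) as [d [Hd Hq]].
    exists d; split; [exact Hd|]. intros y Iy Ny; apply Hq; split; auto.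
Qed.

Lemma cont_limit f : cont_on01 f -> forall x, I01 x -> limit1_in f I01 (f x) x.
Proof. intros H x Hx; apply limit1_in_iff; exact (H x Hx). Qed.

Lemma limit_cont f : (forall x, I01 x -> limit1_in f I01 (f x) x) -> cont_on01 f.
Proof. intros H x Hx; exact (proj1 (limit1_in_iff _ _ _ _) (H x Hx)). Qed.

Lemma punctured01_adherent x : I01 x -> adhDa (punctured01 x) x.
Proof.
  intros Hx alp Ha. unfold punctured01, I01, Rdist in *.
  set (m := Rmin (alp / 2) (1 / 2)).
  assert (0 < m) by (unfold m; apply Rmin_glb_lt; lra).
  assert (m <= alp / 2) by apply Rmin_l. assert (m <= 1 / 2) by apply Rmin_r.
  destruct (Rle_dec x (1 / 2)).
  - exists (x + m). split; [split; lra|].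
    replace (x + m - x) with m by ring. rewrite Rabs_right; lra.
  - exists (x - m). split; [split; lra|].
    replace (x - m - x) with (- m) by ring. rewrite Rabs_Ropp, Rabs_right; lra.
Qed.

Lemma deriv_unique f f1 f2 : has_deriv_on01 f f1 -> has_deriv_on01 f f2 ->
  forall x, I01 x -> f1 x = f2 x.
Proof.
  intros H1 H2 x Hx.
  apply (single_limit (fun y => (f y - f x) / (y - x)) (punctured01 x)) with x.
  - apply punctured01_adherent; auto.
  - apply has_deriv_limit; auto.
  - apply has_deriv_limit; auto.
Qed.

Lemma deriv_id : has_deriv_on01 (fun x => x) (fun _ => 1).
Proof.
  intros x Ix eps He. exists 1. split; [lra|]. intros y Iy Ny Hy.
  replace ((y - x) / (y - x)) with 1 by (field; lra).
  rewrite Rminus_diag, Rabs_R0; lra.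
Qed.

Lemma deriv_ext f g f' : (forall x, I01 x -> f x = g x) ->
  has_deriv_on01 f f' -> has_deriv_on01 g f'.
Proof.
  intros E H x Ix eps He. destruct (H x Ix eps He) as [d [Hd H']].
  exists d; split; auto. intros y Iy Ny Hy. rewrite <- !E; auto.
Qed.

Lemma cont_comp f g : cont_on01 f -> (forall x, I01 x -> I01 (f x)) ->
  cont_on01 g -> cont_on01 (fun x => g (f x)).
Proof.
  intros Cf Mf Cg. apply limit_cont; intros x Hx.
  apply lim_restrict with (Dgf I01 I01 f); [intros y Iy; split; auto|].
  apply limit_comp with (f x); apply cont_limit; auto.
Qed.

Lemma cont_mul f g : cont_on01 f -> cont_on01 g -> cont_on01 (fun x => f x * g x).
Proof.
  intros Cf Cg. apply limit_cont; intros x Hx.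
  apply limit_mul; apply cont_limit; auto.
Qed.

(* Chain rule on [0,1], via the continuous extension of the difference
   quotient of g at f x. *)
Lemma chain_rule f f' g g' : has_deriv_on01 f f' -> has_deriv_on01 g g' ->
  (forall x, I01 x -> I01 (f x)) -> cont_on01 f ->
  has_deriv_on01 (fun x => g (f x)) (fun x => g' (f x) * f' x).
Proof.
  intros Df Dg Mf Cf. apply has_deriv_limit. intros x Hx.
  set (a := f x).
  set (slope := fun z => if Req_EM_T z a then g' a else (g z - g a) / (z - a)).
  assert (Hslope : limit1_in slope I01 (g' a) a).
  { apply limit1_in_iff. intros eps He.
    destruct (Dg a (Mf x Hx) eps He) as [d [Hd H]]. exists d; split; auto.
    intros y Iy Hy. unfold slope. destruct (Req_EM_T y a).
    - rewrite Rminus_diag, Rabs_R0; lra.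
    - apply H; auto. }
  assert (Hcomp : limit1_in (fun y => slope (f y)) (punctured01 x) (g' a) x).
  { apply lim_restrict with (Dgf I01 I01 f); [intros y [Iy _]; split; auto|].
    apply limit_comp with a; auto. apply cont_limit; auto. }
  pose proof (limit_mul _ _ _ _ _ _ Hcomp (proj1 (has_deriv_limit _ _) Df x Hx)) as H.
  eapply lim_ext; [|exact H]. intros y [Iy Ny]. simpl. unfold slope, a.
  destruct (Req_EM_T (f y) (f x)) as [E|E].
  - rewrite E. unfold Rdiv; ring.
  - field; split; intro; [apply E | apply Ny]; lra.
Qed.

Lemma C1_comp f g : C1_on01 f -> C1_on01 g -> (forall x, I01 x -> I01 (f x)) ->
  cont_on01 f -> C1_on01 (fun x => g (f x)).
Proof.
  intros [f' [Df Cf']] [g' [Dg Cg']] Mf Cf. exists (fun x => g' (f x) * f' x).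
  split; [apply chain_rule | apply cont_mul; [apply cont_comp|]]; auto.
Qed.

Lemma inverse_deriv f f' k k' : has_deriv_on01 f f' -> has_deriv_on01 k k' ->
  (forall x, I01 x -> I01 (f x)) -> cont_on01 f ->
  (forall x, I01 x -> k (f x) = x) -> forall x, I01 x -> k' (f x) * f' x = 1.
Proof.
  intros Df Dk Mf Cf E x Ix.
  assert (D : has_deriv_on01 (fun x => x) (fun x => k' (f x) * f' x)).
  { apply deriv_ext with (fun x => k (f x)); auto. apply chain_rule; auto. }
  exact (deriv_unique _ _ _ D deriv_id x Ix).
Qed.

Section IncreasingOnto.

Variable g : R -> R.
Hypothesis g_incr : forall x y, I01 x -> I01 y -> x < y -> g x < g y.
Hypothesis g_0 : g 0 = 0.
Hypothesis g_1 : g 1 = 1.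
Hypothesis g_onto : forall y, I01 y -> exists x, I01 x /\ g x = y.

Lemma incr_maps01 x : I01 x -> I01 (g x).
Proof.
  intros [Hx0 Hx1]. split.
  - destruct (Rle_lt_or_eq_dec _ _ Hx0) as [Hlt| <-]; [|lra].
    rewrite <- g_0. left; apply g_incr; unfold I01; lra.
  - destruct (Rle_lt_or_eq_dec _ _ Hx1) as [Hlt| ->]; [|lra].
    rewrite <- g_1. left; apply g_incr; unfold I01; lra.
Qed.

(* Lower estimate: to the right of x - d (in particular near x), g stays
   above g x - eps.  The preimage of g x - eps/2 provides d. *)
Lemma incr_onto_lower x eps : I01 x -> 0 < eps ->
  exists d, 0 < d /\ forall y, I01 y -> x - d < y -> g x - eps < g y.
Proof.
  intros Ix He.
  destruct (Rle_dec (g x - eps / 2) 0) as [Low|High].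
  - exists 1; split; [lra|]. intros y Iy _.
    destruct (incr_maps01 y Iy). lra.
  - assert (Gx := incr_maps01 x Ix).
    destruct (g_onto (g x - eps / 2)) as [a [Ia Ga]]; [unfold I01 in *; lra|].
    assert (Hax : a < x).
    { destruct (Rlt_le_dec a x) as [|Hxa]; auto.
      destruct (Rle_lt_or_eq_dec _ _ Hxa) as [Hlt| <-]; [|lra].
      pose proof (g_incr x a Ix Ia Hlt). lra. }
    exists (x - a); split; [lra|]. intros y Iy Hy.
    pose proof (g_incr a y Ia Iy ltac:(lra)). lra.
Qed.

End IncreasingOnto.

(* An increasing surjection of [0,1] is continuous; the upper estimate is the
   lower one for the reflected map t |-> 1 - g (1 - t). *)
Lemma incr_onto_cont g :
  (forall x y, I01 x -> I01 y -> x < y -> g x < g y) -> g 0 = 0 -> g 1 = 1 ->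
  (forall y, I01 y -> exists x, I01 x /\ g x = y) -> cont_on01 g.
Proof.
  intros Hm H0 H1 Hs x Ix eps He.
  destruct (incr_onto_lower g Hm H0 H1 Hs x eps Ix He) as [d1 [D1 Lower]].
  set (gr := fun t => 1 - g (1 - t)).
  assert (Rm : forall s t, I01 s -> I01 t -> s < t -> gr s < gr t).
  { intros s t Is It Hst. unfold gr, I01 in *.
    pose proof (Hm (1 - t) (1 - s) ltac:(unfold I01; lra) ltac:(unfold I01; lra) ltac:(lra)). lra. }
  assert (R0 : gr 0 = 0) by (unfold gr; rewrite Rminus_0_r, H1; ring).
  assert (R1 : gr 1 = 1) by (unfold gr; rewrite Rminus_diag, H0; ring).
  assert (Rs : forall y, I01 y -> exists t, I01 t /\ gr t = y).
  { intros y Iy. destruct (Hs (1 - y)) as [t [It Gt]]; [unfold I01 in *; lra|].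
    exists (1 - t). unfold gr, I01 in *. replace (1 - (1 - t)) with t by ring. split; lra. }
  destruct (incr_onto_lower gr Rm R0 R1 Rs (1 - x) eps ltac:(unfold I01 in *; lra) He)
    as [d2 [D2 Upper]].
  exists (Rmin d1 d2). split; [apply Rmin_glb_lt; auto|]. intros y Iy Hy.
  apply Rabs_lt_iff in Hy. destruct Hy as [Hy1 Hy2].
  pose proof (Rmin_l d1 d2). pose proof (Rmin_r d1 d2).
  pose proof (Lower y Iy ltac:(lra)).
  pose proof (Upper (1 - y) ltac:(unfold I01 in *; lra) ltac:(lra)) as U.
  unfold gr in U. replace (1 - (1 - y)) with y in U by ring.
  replace (1 - (1 - x)) with x in U by ring.
  apply Rabs_lt_iff; lra.
Qed.

Lemma homeo_maps f : homeo_plus f -> forall x, I01 x -> I01 (f x).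
Proof. intros [_ [H0 [H1 [Hm _]]]]. apply incr_maps01; auto. Qed.

Lemma homeo_cont f : homeo_plus f -> cont_on01 f.
Proof. intros [_ [_ [_ [_ [H _]]]]]; exact H. Qed.

Lemma homeo_comp f g : homeo_plus f -> homeo_plus g -> homeo_plus (fun x => f (g x)).
Proof.
  intros Hf Hg. pose proof (homeo_maps g Hg) as Mg.
  destruct Hf as [Of [F0 [F1 [Fm [Fc Fs]]]]].
  destruct Hg as [Og [G0 [G1 [Gm [Gc Gs]]]]].
  split; [|split; [|split; [|split; [|split]]]].
  - intros x Hx. rewrite Og, Of; auto.
  - rewrite G0; auto.
  - rewrite G1; auto.
  - intros x y Hx Hy Hxy. apply Fm; auto.
  - apply cont_comp; auto.
  - intros y Hy. destruct (Fs y Hy) as [z [Iz <-]].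
    destruct (Gs z Iz) as [x [Ix <-]]. exists x; auto.
Qed.

Lemma homeo_inv f g : homeo_plus f -> inverse_pair f g -> homeo_plus g.
Proof.
  intros Hf Hp. pose proof (homeo_maps f Hf) as Mf.
  destruct Hf as [Of [F0 [F1 [Fm [Fc Fs]]]]].
  assert (Mg : forall x, I01 x -> I01 (g x)).
  { intros x Hx. destruct (classic (I01 (g x))) as [I|I]; auto.
    destruct (Hp x) as [E _]. rewrite Of in E; auto. rewrite E in I; tauto. }
  assert (Og : forall x, ~ I01 x -> g x = x).
  { intros x Hx. destruct (classic (I01 (g x))) as [I|I].
    - destruct (Hp x) as [E _]. exfalso; apply Hx; rewrite <- E; auto.
    - destruct (Hp x) as [E _]. rewrite Of in E; auto. }
  assert (Gm : forall x y, I01 x -> I01 y -> x < y -> g x < g y).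
  { intros x y Hx Hy Hxy. destruct (Rlt_le_dec (g x) (g y)) as [|Hle]; auto.
    destruct (Rle_lt_or_eq_dec _ _ Hle) as [Hlt|Heq].
    - pose proof (Fm _ _ (Mg y Hy) (Mg x Hx) Hlt) as H.
      rewrite (proj1 (Hp x)), (proj1 (Hp y)) in H. lra.
    - apply (f_equal f) in Heq. rewrite (proj1 (Hp x)), (proj1 (Hp y)) in Heq. lra. }
  assert (Gs : forall y, I01 y -> exists x, I01 x /\ g x = y)
    by (intros y Hy; exists (f y); split; [auto | apply Hp]).
  assert (G0 : g 0 = 0) by (rewrite <- F0 at 1; apply Hp).
  assert (G1 : g 1 = 1) by (rewrite <- F1 at 1; apply Hp).
  repeat split; auto. apply incr_onto_cont; auto.
Qed.

Lemma homeo_has_inv f : homeo_plus f -> exists g, inverse_pair f g.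
Proof.
  intros Hf. pose proof (homeo_maps f Hf) as Mf.
  destruct Hf as [Of [F0 [F1 [Fm [Fc Fs]]]]].
  assert (Pre : forall y, exists x, (I01 y -> I01 x /\ f x = y) /\ (~ I01 y -> x = y)).
  { intros y. destruct (classic (I01 y)) as [I|I].
    - destruct (Fs y I) as [x [Ix Fx]]. exists x; split; tauto.
    - exists y; split; tauto. }
  destruct (choice _ Pre) as [g Hg]. exists g. intros x. split.
  - destruct (Hg x) as [In Out]. destruct (classic (I01 x)) as [I|I].
    + apply In; auto.
    + rewrite Out; auto.
  - destruct (classic (I01 x)) as [I|I].
    + destruct (proj1 (Hg (f x)) (Mf x I)) as [Iz Fz].
      destruct (Rtotal_order (g (f x)) x) as [L|[E|L]]; auto.
      * pose proof (Fm _ _ Iz I L); lra.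
      * pose proof (Fm _ _ I Iz L); lra.
    + rewrite Of; auto. apply (proj2 (Hg x)); auto.
Qed.

Definition induced_deriv (v u' : R -> R) : R -> R :=
  fun x => if Req_EM_T (v x) x then 1 else u' x.

Section InducedMaps.

Variables u u' v : R -> R.
Hypothesis u_cont : cont_on01 u.
Hypothesis v_cont : cont_on01 v.
Hypothesis v_induced : forall x, I01 x -> v x = x \/ v x = u x.
Hypothesis u'_fixed : forall p, I01 p -> u p = p -> u' p = 1.

Lemma induced_local x : I01 x -> u x <> x ->
  exists d, 0 < d /\ forall y, I01 y -> Rabs (y - x) < d ->
    (v x = x -> v y = y) /\ (v x <> x -> v y = u y /\ v y <> y).
Proof.
  intros Ix Nx.
  set (e := Rabs (u x - x)).
  assert (He : 0 < e) by (unfold e; apply Rabs_pos_lt; lra).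
  destruct (u_cont x Ix (e / 2) ltac:(lra)) as [d1 [D1 H1]].
  destruct (v_cont x Ix (e / 2) ltac:(lra)) as [d2 [D2 H2]].
  exists (Rmin (Rmin d1 d2) (e / 2)). split; [repeat apply Rmin_glb_lt; lra|].
  intros y Iy Hy.
  pose proof (Rmin_l (Rmin d1 d2) (e / 2)). pose proof (Rmin_r (Rmin d1 d2) (e / 2)).
  pose proof (Rmin_l d1 d2). pose proof (Rmin_r d1 d2).
  specialize (H1 y Iy ltac:(lra)). specialize (H2 y Iy ltac:(lra)).
  pose proof (Rdist_tri (u x) x (u y)) as T1. pose proof (Rdist_tri (u x) x y) as T2.
  unfold Rdist in T1, T2. rewrite (Rabs_minus_sym (u x) (u y)) in T1.
  rewrite (Rabs_minus_sym (u x) y) in T2. fold e in T1, T2.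
  split.
  - intros Ev. destruct (v_induced y Iy) as [E|E]; auto.
    rewrite Ev, E in H2. lra.
  - intros Ev. destruct (v_induced x Ix) as [E|E]; [tauto|].
    assert (Nv : v y <> y) by (intro Ey; rewrite E, Ey in H2; lra).
    destruct (v_induced y Iy) as [E2|E2]; tauto.
Qed.

Hypothesis u_deriv : has_deriv_on01 u u'.

Lemma induced_has_deriv : has_deriv_on01 v (induced_deriv v u').
Proof.
  intros x Ix eps He. unfold induced_deriv.
  destruct (Req_EM_T (u x) x) as [Ux|Ux].
  -
    assert (Vx : v x = x) by (destruct (v_induced x Ix); congruence).
    destruct (Req_EM_T (v x) x); [|tauto].
    destruct (u_deriv x Ix eps He) as [d [Hd H]]. rewrite u'_fixed in H; auto.
    exists d; split; auto. intros y Iy Ny Hy.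
    destruct (v_induced y Iy) as [E|E]; rewrite E, Vx.
    + replace ((y - x) / (y - x)) with 1 by (field; lra).
      rewrite Rminus_diag, Rabs_R0; lra.
    + rewrite <- Ux at 1. apply H; auto.
  - destruct (induced_local x Ix Ux) as [d0 [D0 L]].
    destruct (Req_EM_T (v x) x) as [Vx|Vx].
    + exists d0; split; auto. intros y Iy Ny Hy.
      rewrite (proj1 (L y Iy Hy) Vx), Vx.
      replace ((y - x) / (y - x)) with 1 by (field; lra).
      rewrite Rminus_diag, Rabs_R0; lra.
    + destruct (u_deriv x Ix eps He) as [d [Hd H]].
      exists (Rmin d d0). split; [apply Rmin_glb_lt; auto|]. intros y Iy Ny Hy.
      pose proof (Rmin_l d d0). pose proof (Rmin_r d d0).
      destruct (proj2 (L y Iy ltac:(lra)) Vx) as [E _].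
      assert (Ex : v x = u x) by (destruct (v_induced x Ix); tauto).
      rewrite E, Ex. apply H; auto. lra.
Qed.

Hypothesis u'_cont : cont_on01 u'.

Lemma induced_deriv_cont : cont_on01 (induced_deriv v u').
Proof.
  intros x Ix eps He. unfold induced_deriv.
  destruct (Req_EM_T (u x) x) as [Ux|Ux].
  - assert (Vx : v x = x) by (destruct (v_induced x Ix); congruence).
    destruct (Req_EM_T (v x) x); [|tauto].
    destruct (u'_cont x Ix eps He) as [d [Hd H]]. rewrite u'_fixed in H; auto.
    exists d; split; auto. intros y Iy Hy.
    destruct (Req_EM_T (v y) y); [rewrite Rminus_diag, Rabs_R0; lra | auto].
  - destruct (induced_local x Ix Ux) as [d0 [D0 L]].
    destruct (Req_EM_T (v x) x) as [Vx|Vx].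
    + exists d0; split; auto. intros y Iy Hy.
      destruct (Req_EM_T (v y) y); [|pose proof (proj1 (L y Iy Hy) Vx); tauto].
      rewrite Rminus_diag, Rabs_R0; lra.
    + destruct (u'_cont x Ix eps He) as [d [Hd H]].
      exists (Rmin d d0). split; [apply Rmin_glb_lt; auto|]. intros y Iy Hy.
      pose proof (Rmin_l d d0). pose proof (Rmin_r d d0).
      destruct (proj2 (L y Iy ltac:(lra)) Vx) as [_ E].
      destruct (Req_EM_T (v y) y); [tauto|]. apply H; auto. lra.
Qed.

End InducedMaps.

Lemma inverse_unique f g k : inverse_pair f g -> inverse_pair f k -> g = k.
Proof.
  intros H1 H2. apply functional_extensionality; intro x.
  rewrite <- (proj1 (H2 x)) at 1. apply (proj2 (H1 (k x))).
Qed.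

Lemma diff1_homeo f : diff1_plus f -> homeo_plus f.
Proof. intros [H _]; exact H. Qed.

Lemma diff1_C1 f : diff1_plus f -> C1_on01 f.
Proof. intros [_ [H _]]; exact H. Qed.

Lemma diff1_id : diff1_plus (fun x => x).
Proof.
  assert (C1id : C1_on01 (fun x => x)).
  { exists (fun _ => 1); split; [apply deriv_id|].
    intros x _ eps He; exists 1; split; [lra|].
    intros; rewrite Rminus_diag, Rabs_R0; lra. }
  repeat split; auto.
  - intros x _ eps He; exists eps; split; auto.
  - intros y Hy; exists y; auto.
  - exists (fun x => x); split; auto. intro; auto.
Qed.

Lemma diff1_inv f g : diff1_plus f -> inverse_pair f g -> diff1_plus g.
Proof.
  intros [Hf [Cf [k [Pk Ck]]]] P. rewrite <- (inverse_unique _ _ _ Pk P).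
  split; [apply homeo_inv with f; auto|]. split; auto.
  exists f; split; auto. intro x; split; apply Pk.
Qed.

Lemma diff1_comp f g : diff1_plus f -> diff1_plus g -> diff1_plus (fun x => f (g x)).
Proof.
  intros [Hf [Cf [fi [Pf Cfi]]]] [Hg [Cg [gi [Pg Cgi]]]].
  split; [apply homeo_comp; auto|]. split.
  - apply C1_comp; auto; [apply homeo_maps | apply homeo_cont]; auto.
  - exists (fun x => gi (fi x)). split.
    + intro x; split.
      * rewrite (proj1 (Pg _)), (proj1 (Pf _)); auto.
      * rewrite (proj2 (Pf _)), (proj2 (Pg _)); auto.
    + pose proof (homeo_inv _ _ Hf Pf) as Hfi.
      apply C1_comp; auto; [apply homeo_maps | apply homeo_cont]; auto.
Qed.

Lemma conv_comp u v : (forall n, homeo_plus (v n)) ->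
  conv_C1_id u -> conv_C1_id v -> conv_C1_id (fun n x => u n (v n x)).
Proof.
  intros Hv [u' [Du Cu]] [v' [Dv Cv]].
  exists (fun n x => u' n (v n x) * v' n x). split.
  - intro n. apply chain_rule; auto; [apply homeo_maps | apply homeo_cont]; auto.
  - intros eps He. set (e := Rmin (eps / 3) 1).
    assert (E1 : 0 < e) by (apply Rmin_glb_lt; lra).
    assert (E2 : e <= eps / 3) by apply Rmin_l. assert (E3 : e <= 1) by apply Rmin_r.
    destruct (Cu e E1) as [N1 H1]. destruct (Cv e E1) as [N2 H2].
    exists (max N1 N2). intros n Hn x Ix.
    destruct (H1 n ltac:(lia) (v n x) (homeo_maps _ (Hv n) x Ix)) as [A1 B1].
    destruct (H2 n ltac:(lia) x Ix) as [A2 B2].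
    apply Rabs_lt_iff in A1, B1, A2, B2. split; apply Rabs_lt_iff.
    + lra.
    + set (a := u' n (v n x)) in *. set (b := v' n x) in *. split; nra.
Qed.

Lemma conv_inv u w : conv_C1_id u -> (forall n, homeo_plus (w n)) ->
  (forall n x, I01 x -> u n (w n x) = x) ->
  (forall n, exists d, has_deriv_on01 (w n) d) -> conv_C1_id w.
Proof.
  intros [u' [Du Cu]] Hw E Dw. destruct (choice _ Dw) as [w' Dw'].
  exists w'. split; auto.
  assert (K : forall n x, I01 x -> u' n (w n x) * w' n x = 1).
  { intros n x Ix. apply (inverse_deriv (w n) (w' n) (u n) (u' n)); auto;
      [apply homeo_maps | apply homeo_cont]; auto. }
  intros eps He. set (e := Rmin (eps / 2) (1 / 2)).
  assert (E1 : 0 < e) by (apply Rmin_glb_lt; lra).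
  assert (E2 : e <= eps / 2) by apply Rmin_l. assert (E3 : e <= 1 / 2) by apply Rmin_r.
  destruct (Cu e E1) as [N H1]. exists N. intros n Hn x Ix.
  destruct (H1 n Hn (w n x) (homeo_maps _ (Hw n) x Ix)) as [A B]. rewrite E in A; auto.
  pose proof (K n x Ix) as Kx.
  apply Rabs_lt_iff in A, B. split; apply Rabs_lt_iff.
  + lra.
  + set (a := u' n (w n x)) in *. set (b := w' n x) in *. split; nra.
Qed.

Lemma conv_induced u v : conv_C1_id u ->
  (forall n, cont_on01 (u n)) -> (forall n, cont_on01 (v n)) ->
  (forall n x, I01 x -> v n x = x \/ v n x = u n x) ->
  (forall n u', has_deriv_on01 (u n) u' -> forall p, I01 p -> u n p = p -> u' p = 1) ->
  conv_C1_id v.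
Proof.
  intros [u' [Du Cu]] Cun Cvn Hi Fp.
  exists (fun n => induced_deriv (v n) (u' n)). split.
  - intro n. apply (induced_has_deriv (u n)); auto. apply Fp; auto.
  - intros eps He. destruct (Cu eps He) as [N H]. exists N. intros n Hn x Ix.
    destruct (H n Hn x Ix) as [A B]. unfold induced_deriv.
    destruct (Req_EM_T (v n x) x) as [E|E].
    + rewrite E, !Rminus_diag, Rabs_R0. lra.
    + destruct (Hi n x Ix) as [E2|E2]; [tauto|]. rewrite E2. auto.
Qed.

Section Conjugation.

Variables h hinv : nat -> R -> R.
Hypothesis h_diff : forall n, diff1_plus (h n).
Hypothesis h_inv : forall n, inverse_pair (h n) (hinv n).

Lemma hinv_diff n : diff1_plus (hinv n).
Proof. apply diff1_inv with (h n); auto. Qed.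

Lemma conj_homeo g : homeo_plus g -> forall n, homeo_plus (fun x => h n (g (hinv n x))).
Proof.
  intros Hg n. apply homeo_comp; [apply diff1_homeo; auto|].
  apply homeo_comp; auto. apply diff1_homeo, hinv_diff.
Qed.

Lemma conj_has_deriv g : diff1_plus g -> forall n, exists d,
  has_deriv_on01 (fun x => h n (g (hinv n x))) d.
Proof.
  intros Dg n. destruct (diff1_C1 _ (diff1_comp _ _ (h_diff n) (diff1_comp _ _ Dg (hinv_diff n))))
    as [d [D _]]. exists d; exact D.
Qed.

Lemma conj_deriv_fixed g g' u' n p : homeo_plus g -> has_deriv_on01 g g' ->
  has_deriv_on01 (fun x => h n (g (hinv n x))) u' -> I01 p -> g p = p ->
  u' (h n p) = g' p.
Proof.
  intros Hg Dg Du Ip Gp.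
  destruct (diff1_C1 _ (h_diff n)) as [H' [DH _]].
  destruct (diff1_C1 _ (hinv_diff n)) as [K' [DK _]].
  pose proof (diff1_homeo _ (h_diff n)) as Hh.
  pose proof (diff1_homeo _ (hinv_diff n)) as Hhi.
  assert (D1 : has_deriv_on01 (fun x => g (hinv n x)) (fun x => g' (hinv n x) * K' x))
    by (apply chain_rule; auto; [apply homeo_maps | apply homeo_cont]; auto).
  assert (D2 : has_deriv_on01 (fun x => h n (g (hinv n x)))
                 (fun x => H' (g (hinv n x)) * (g' (hinv n x) * K' x))).
  { apply (chain_rule (fun x => g (hinv n x))); auto;
      [apply homeo_maps | apply homeo_cont]; apply homeo_comp; auto. }
  assert (Ihp : I01 (h n p)) by (apply homeo_maps; auto).
  assert (Kp : K' (h n p) * H' p = 1).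
  { apply (inverse_deriv (h n) H' (hinv n) K'); auto;
      [apply homeo_maps | apply homeo_cont | intros; apply h_inv]; auto. }
  rewrite (deriv_unique _ _ _ Du D2 _ Ihp), (proj2 (h_inv n p)), Gp.
  replace (H' p * (g' p * K' (h n p))) with (g' p * (K' (h n p) * H' p)) by ring.
  rewrite Kp; ring.
Qed.

Lemma GH_deriv_fixed g g' p : G_H h hinv g -> has_deriv_on01 g g' ->
  I01 p -> g p = p -> g' p = 1.
Proof.
  intros [Dg [u' [Du Cu]]] Dg' Ip Gp.
  assert (Const : forall n, u' n (h n p) = g' p)
    by (intro n; apply conj_deriv_fixed with g; auto; apply diff1_homeo; auto).
  destruct (Req_EM_T (g' p) 1) as [E|E]; auto. exfalso.
  assert (Hpos : 0 < Rabs (g' p - 1)) by (apply Rabs_pos_lt; lra).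
  destruct (Cu _ Hpos) as [N HN].
  assert (Ih : I01 (h N p)) by (apply homeo_maps; auto; apply diff1_homeo; auto).
  destruct (HN N (le_n _) (h N p) Ih) as [_ B]. rewrite Const in B. lra.
Qed.

Lemma GH_conj_deriv_fixed g n u' q : G_H h hinv g ->
  has_deriv_on01 (fun x => h n (g (hinv n x))) u' ->
  I01 q -> h n (g (hinv n q)) = q -> u' q = 1.
Proof.
  intros Gg Du Iq Fq. pose proof Gg as [Dg _].
  destruct (diff1_C1 _ Dg) as [g' [Dg' _]].
  set (p := hinv n q).
  assert (Ip : I01 p) by (apply homeo_maps; auto; apply diff1_homeo, hinv_diff).
  assert (Gp : g p = p)
    by (unfold p; rewrite <- (proj2 (h_inv n (g (hinv n q)))), Fq; auto).
  assert (Hq : h n p = q) by (apply h_inv).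
  rewrite <- Hq, (conj_deriv_fixed g g' u' n p); auto; [|apply diff1_homeo; auto].
  apply GH_deriv_fixed with g; auto.
Qed.

Lemma GH_id : G_H h hinv (fun x => x).
Proof.
  split; [apply diff1_id|]. exists (fun _ _ => 1). split.
  - intro n. apply deriv_ext with (fun x => x); [intros; symmetry; apply h_inv | apply deriv_id].
  - intros eps He. exists O. intros n _ x Ix.
    rewrite (proj1 (h_inv n x)), !Rminus_diag, Rabs_R0. lra.
Qed.

Lemma GH_comp f g : G_H h hinv f -> G_H h hinv g -> G_H h hinv (fun x => f (g x)).
Proof.
  intros [Df Cf] [Dg Cg]. split; [apply diff1_comp; auto|].
  assert (Split : (fun n x => h n (f (g (hinv n x)))) =
    (fun n x => h n (f (hinv n (h n (g (hinv n x))))))).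
  { apply functional_extensionality; intro n; apply functional_extensionality; intro x.
    rewrite (proj2 (h_inv n _)). reflexivity. }
  rewrite Split. apply (conv_comp (fun n y => h n (f (hinv n y)))); auto.
  intro n; apply conj_homeo, diff1_homeo; auto.
Qed.

Lemma GH_inv f g : G_H h hinv f -> inverse_pair f g -> G_H h hinv g.
Proof.
  intros [Df Cf] P. assert (Dg : diff1_plus g) by (apply diff1_inv with f; auto).
  split; auto. apply (conv_inv (fun n y => h n (f (hinv n y)))); auto.
  - intro n; apply conj_homeo, diff1_homeo; auto.
  - intros n x Ix. rewrite (proj2 (h_inv n _)), (proj1 (P _)), (proj1 (h_inv n _)). auto.
  - apply conj_has_deriv; auto.
Qed.

Lemma GH_induced_C1 g v : G_H h hinv g -> homeo_plus v ->
  (forall x, I01 x -> v x = x \/ v x = g x) -> C1_on01 v.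
Proof.
  intros Gg Hv Hi. pose proof Gg as [Dg _].
  destruct (diff1_C1 _ Dg) as [g' [Dg' Cg']].
  pose proof (homeo_cont _ (diff1_homeo _ Dg)) as Cg.
  assert (Fix : forall p, I01 p -> g p = p -> g' p = 1)
    by (intros p Ip Gp; apply (GH_deriv_fixed g g' p); auto).
  exists (induced_deriv v g'). split.
  - apply (induced_has_deriv g); auto; apply homeo_cont; auto.
  - apply (induced_deriv_cont g); auto; apply homeo_cont; auto.
Qed.

Lemma GH_induced g v : G_H h hinv g -> induced v g -> G_H h hinv v.
Proof.
  intros Gg [Hv Hi]. pose proof Gg as [Dg Cg].
  split.
  - split; auto. split; [apply (GH_induced_C1 g); auto|].
    destruct (homeo_has_inv v Hv) as [k Pk]. exists k; split; auto.
    (* the inverse of v is induced by the inverse of g *)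
    destruct Dg as [_ [_ [gi [Pg _]]]].
    pose proof (homeo_inv v k Hv Pk) as Hk.
    apply (GH_induced_C1 gi); [apply GH_inv with g; auto | exact Hk|].
    intros y Iy. pose proof (homeo_maps k Hk y Iy) as Ix.
    destruct (Hi (k y) Ix) as [E|E]; rewrite (proj1 (Pk y)) in E.
    + left; auto.
    + right. rewrite E at 2. symmetry; apply Pg.
  - apply (conv_induced (fun n y => h n (g (hinv n y)))); auto.
    + intro n; apply homeo_cont, conj_homeo, diff1_homeo; auto.
    + intro n; apply homeo_cont, conj_homeo; auto.
    + intros n x Ix.
      assert (I01 (hinv n x)) by (apply homeo_maps; auto; apply diff1_homeo, hinv_diff).
      destruct (Hi _ H) as [E|E]; rewrite E; [left; apply h_inv | right; auto].
    + intros n u' Du p Ip Fp. apply (GH_conj_deriv_fixed g n u' p); auto.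
Qed.

Lemma GH_I_op S : (forall f, S f -> G_H h hinv f) -> forall f, I_op S f -> G_H h hinv f.
Proof.
  intros HS f Hf. induction Hf as [f [g [Sg Ind]]| |f g _ IHf _ IHg|f g _ IHf P|f g _ IHf E].
  - apply GH_induced with g; auto.
  - apply GH_id.
  - apply GH_comp; auto.
  - apply GH_inv with f; auto.
  - replace g with f; auto. apply functional_extensionality; auto.
Qed.

Lemma GH_I_iter G : (forall f, G f -> G_H h hinv f) ->
  forall n f, I_iter n G f -> G_H h hinv f.
Proof. intros HG n; induction n; simpl; auto. apply GH_I_op; auto. Qed.

End Conjugation.

(* Every homeomorphism is induced by itself, so S is contained in I(S). *)
Lemma I_op_extends S : (forall f, S f -> homeo_plus f) -> forall f, S f -> I_op S f.
Proof.
  intros HS f Sf. apply gen_base. exists f. split; [exact Sf|].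
  split; [apply HS; exact Sf | intros; right; reflexivity].
Qed.

Lemma I_iter_mono G : (forall n f, I_iter n G f -> homeo_plus f) ->
  forall n m f, (n <= m)%nat -> I_iter n G f -> I_iter m G f.
Proof.
  intros HG n m f Hnm. induction Hnm; auto.
  intro Hf. simpl. apply I_op_extends; [apply HG | auto].
Qed.

Lemma I_inf_group G : is_group G -> (forall n f, I_iter n G f -> homeo_plus f) ->
  is_group (I_inf G).
Proof.
  intros [Gid _] HG. split; [|split].
  - exists O; exact Gid.
  - intros f g [n1 H1] [n2 H2]. exists (S (max n1 n2)).
    assert (Lift : forall n k, (n <= max n1 n2)%nat -> I_iter n G k -> I_iter (S (max n1 n2)) G k)
      by (intros n k Hn Hk; apply (I_iter_mono G HG) with n; [lia | exact Hk]).
    apply gen_comp; [apply Lift with n1 | apply Lift with n2]; auto; lia.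
  - intros f [n Hf]. destruct (homeo_has_inv f (HG n f Hf)) as [g Pg].
    exists g. split; auto. exists (S n). apply gen_inv with f; auto.
    exact (I_iter_mono G HG n (S n) f (le_S _ _ (le_n n)) Hf).
Qed.

Theorem corollaryc (G : (R -> R) -> Prop) (h hinv : nat -> R -> R)
  (HGgrp : is_group G) (HGdiff : forall g, G g -> diff1_plus g)
  (Hh : forall n, diff1_plus (h n))
  (Hhinv : forall n, inverse_pair (h n) (hinv n))
  (Hconv : forall g, G g -> conv_C1_id (fun n x => h n (g (hinv n x)))) :
  (forall f, I_inf G f -> G_H h hinv f) /\
  is_group (I_inf G) /\ (forall f, I_inf G f -> diff1_plus f) /\
  C1_close_to_id (I_inf G).
Proof.
  assert (Levels : forall n f, I_iter n G f -> G_H h hinv f).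
  { apply GH_I_iter; auto. intros g Gg; split; auto. }
  assert (Completion : forall f, I_inf G f -> G_H h hinv f)
    by (intros f [n Hf]; exact (Levels n f Hf)).
  split; [exact Completion|]. split; [|split].
  - apply I_inf_group; auto.
    intros n f Hf. apply diff1_homeo, (Levels n f Hf).
  - intros f Hf. apply (Completion f Hf).
  - exists h, hinv. split; [exact Hh|]. split; [exact Hhinv|].
    intros g Hg. apply (Completion g Hg).
Qed.
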